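(* In any correlational scenario with finite setting and outcome sets, the set $\mathcal{DC}$ of deterministically consistent correlations is convex and equals the convex hull of the deterministic correlations it contains; in particular it is a convex polytope all of whose vertices are deterministic correlations.
   Context: Parties $S_1,\dots,S_N$ with finite setting sets $A_k$ and outcome sets $X_k$; a correlation is a conditional distribution $p(\vec x|\vec a)$; deterministic correlations are those of the form $\delta_{\vec x,f(\vec a)}$. For finite sets $I_k,O_k$, a conditional distribution $p(\vec i|\vec o)$ is a classical process if for all finite $A_k,X_k$ and all local interventions $p(x_k,o_k|a_k,i_k)$ the expression $\sum_{\vec i,\vec o}\prod_k p(x_k,o_k|a_k,i_k)p(\vec i|\vec o)$ is a valid conditional probability distribution over $\vec x$ for each $\vec a$. A process function is a function $\omega:\vec O\to\vec I$ with $\delta_{\vec i,\omega(\vec o)}$ a classical process. The deterministic-extrema polytope (for given $I_k,O_k$) is the convex hull of $\{\delta_{\vec i,\omega(\vec o)}\}$ over process functions $\omega$. A correlation is deterministically consistent if it equals $\sum_{\vec i,\vec o}\prod_k p(x_k,o_k|a_k,i_k)p(\vec i|\vec o)$ for some finite $I_k,O_k$, local interventions, and $p(\vec i|\vec o)$ in the deterministic-extrema polytope. *)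

From HB Require Import structures.
From mathcomp Require Import all_boot all_order all_algebra.
From mathcomp Require Import reals.
Set Implicit Arguments. Unset Strict Implicit. Unset Printing Implicit Defensive.
Import Order.TTheory GRing.Theory Num.Theory.
Local Open Scope ring_scope.

(* Finite sets are modelled by ordinals 'I_n.  For N parties with
   per-party set sizes n : 'I_N -> nat, a vector (one element per party). *)
Definition vec (N : nat) (n : 'I_N -> nat) : finType :=
  {dffun forall k : 'I_N, 'I_(n k)}.

Section Defs.
Variable R : realType.

Definition is_cond (T U : finType) (p : T -> U -> R) : Prop :=
  (forall t u, 0 <= p t u) /\ (forall u, \sum_(t : T) p t u = 1).

Definition conv_hull (T U : finType) (S : (T -> U -> R) -> Prop)
  (p : T -> U -> R) : Prop :=
  exists (m : nat) (w : 'I_m -> R) (q : 'I_m -> T -> U -> R),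
    [/\ forall j, 0 <= w j, \sum_(j < m) w j = 1, forall j, S (q j)
      & forall t u, p t u = \sum_(j < m) w j * q j t u].

Definition convex_set (T U : finType) (S : (T -> U -> R) -> Prop) : Prop :=
  forall (p q : T -> U -> R) (l : R), 0 <= l -> l <= 1 -> S p -> S q ->
    S (fun t u => l * p t u + (1 - l) * q t u).

(* Local intervention of party k: p(x_k, o_k | a_k, i_k). *)
Definition local_int (N : nat) (nA nX nI nO : 'I_N -> nat) :=
  forall k : 'I_N, 'I_(nX k) * 'I_(nO k) -> 'I_(nA k) * 'I_(nI k) -> R.

Definition valid_local_int N (nA nX nI nO : 'I_N -> nat)
  (L : local_int nA nX nI nO) : Prop :=
  forall k, is_cond (L k).

Definition compose N (nA nX nI nO : 'I_N -> nat)
  (L : local_int nA nX nI nO) (W : vec nI -> vec nO -> R)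
  (x : vec nX) (a : vec nA) : R :=
  \sum_(i : vec nI) \sum_(o : vec nO)
     (\prod_(k < N) L k (x k, o k) (a k, i k)) * W i o.

Definition classical_process N (nI nO : 'I_N -> nat)
  (W : vec nI -> vec nO -> R) : Prop :=
  forall (nA nX : 'I_N -> nat) (L : local_int nA nX nI nO),
    valid_local_int L -> is_cond (compose L W).

Definition delta_fun (T U : finType) (f : U -> T) : T -> U -> R :=
  fun t u => if t == f u then 1 else 0.

Definition process_function N (nI nO : 'I_N -> nat)
  (omega : vec nO -> vec nI) : Prop :=
  classical_process (delta_fun omega).

Definition det_extrema_polytope N (nI nO : 'I_N -> nat)
  (W : vec nI -> vec nO -> R) : Prop :=
  conv_hull (fun V => exists omega, process_function omega /\
                                    V = delta_fun omega) W.

Definition deterministic_corr N (nA nX : 'I_N -> nat)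
  (p : vec nX -> vec nA -> R) : Prop :=
  exists f : vec nA -> vec nX, p = delta_fun f.

Definition det_consistent N (nA nX : 'I_N -> nat)
  (p : vec nX -> vec nA -> R) : Prop :=
  exists (nI nO : 'I_N -> nat) (L : local_int nA nX nI nO)
         (W : vec nI -> vec nO -> R),
    [/\ valid_local_int L, det_extrema_polytope W
      & forall x a, p x a = compose L W x a].

End Defs.

From HB Require Import structures.
From mathcomp Require Import all_boot all_order all_algebra.
From mathcomp Require Import reals.
From mathcomp Require Import ring zify.
From Stdlib Require Import FunctionalExtensionality.
Set Implicit Arguments. Unset Strict Implicit. Unset Printing Implicit Defensive.
Import Order.TTheory GRing.Theory Num.Theory.
Local Open Scope ring_scope.

(* Two scenarios (I1, O1, L1, W1) and (I2, O2, L2, W2) are run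
   side by side: every party's inputs and outputs become the disjoint unions
   I1 + I2 and O1 + O2, and an intervention acts as L1 on block-1 inputs and
   as L2 on block-2 inputs.  Each W_b is transported into the summed spaces
   by a partywise relabelling; relabellings preserve process functions (a
   relabelled experiment is a coarse-graining of an unrelabelled one), hence
   the deterministic-extrema polytope, and they leave the composition
   unchanged.  Mixing the two transported processes realises the mixture.

   A process in the polytope is a mixture of process functions, and
   composition is linear in the process and in each party's intervention.
   Decomposing every intervention into deterministic ones reduces to
   deterministic interventions against a process function; the result then
   takes natural-number values, so it is itself a deterministic correlation,
   and clearly a consistent one.  Conversely the hull lies in DC by
   convexity. *)

Section ConvexHull.
Variables (R : realType) (T U : finType).
Implicit Types (S C : (T -> U -> R) -> Prop) (p : T -> U -> R).

Lemma pointwise_transport C p q : (forall t u, p t u = q t u) -> C p -> C q.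
Proof.
move=> pq; suff -> : p = q by [].
by apply: functional_extensionality => t; apply: functional_extensionality.
Qed.

Lemma convex_seq C (I : eqType) (r : seq I) (w : I -> R) (q : I -> T -> U -> R) :
  convex_set C -> (forall i, 0 <= w i) -> (forall i, C (q i)) ->
  0 < \sum_(i <- r) w i ->
  C (fun t u => (\sum_(i <- r) w i * q i t u) / \sum_(i <- r) w i).
Proof.
move=> convC w_ge0 Cq; elim: r => [|i0 r IHr]; first by rewrite big_nil ltxx.
rewrite big_cons; set s := \sum_(i <- r) w i => s0_gt0.
have : 0 <= s by apply: sumr_ge0 => i _.
rewrite le_eqVlt eq_sym => /orP [/eqP s_eq0 | s_gt0]; last first.
- (* split off i0 with weight w i0 / (w i0 + s) *)
  have s0_neq0 : w i0 + s != 0 by rewrite gt_eqF.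
  have l_ge0 : 0 <= w i0 / (w i0 + s) by rewrite divr_ge0 // ltW.
  have l_le1 : w i0 / (w i0 + s) <= 1 by rewrite ler_pdivrMr // mul1r lerDl ltW.
  apply: pointwise_transport (convC _ _ _ l_ge0 l_le1 (Cq i0) (IHr s_gt0)) => t u.
  rewrite big_cons -/s; field; by rewrite s0_neq0 gt_eqF.
- (* all the remaining weights vanish, so the combination is q i0 *)
  have w_r0 i : i \in r -> w i = 0.
    move=> ir; move/eqP: s_eq0; rewrite psumr_eq0 //.
    by move/allP/(_ i ir)/implyP/(_ isT)/eqP.
  rewrite s_eq0 addr0 in s0_gt0 *; apply: pointwise_transport (Cq i0) => t u.
  rewrite big_cons big_seq big1 ?addr0 => [|i /w_r0 ->]; last by rewrite mul0r.
  by rewrite mulrAC divff ?mul1r // gt_eqF.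
Qed.

Lemma convex_comb C (I : finType) (w : I -> R) (q : I -> T -> U -> R) p :
  convex_set C -> (forall i, 0 <= w i) -> \sum_i w i = 1 ->
  (forall i, C (q i)) -> (forall t u, p t u = \sum_i w i * q i t u) -> C p.
Proof.
move=> convC w_ge0 w_sum1 Cq p_eq.
have := convex_seq (r := index_enum I) convC w_ge0 Cq; rewrite w_sum1 ltr01 => /(_ isT).
by apply: pointwise_transport => t u; rewrite divr1 p_eq.
Qed.

Lemma conv_hull_min S C p :
  convex_set C -> (forall q, S q -> C q) -> conv_hull S p -> C p.
Proof.
move=> convC SC [m [w [q [w_ge0 w_sum1 Sq p_eq]]]].
by apply: (convex_comb convC w_ge0 w_sum1) p_eq => j; apply: SC.
Qed.

Lemma conv_hull_in S p : S p -> conv_hull S p.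
Proof.
move=> Sp; exists 1%N, (fun _ => 1), (fun _ => p).
split=> [_||_|t u]; rewrite ?ler01 ?big_ord1 ?mul1r //.
Qed.

(* Concatenating the two families of a binary convex combination. *)
Lemma conv_hull_convex S : convex_set (conv_hull S).
Proof.
move=> p1 p2 l l_ge0 l_le1 [m1 [w1 [q1 [w1_ge0 w1_sum1 Sq1 p1_eq]]]]
  [m2 [w2 [q2 [w2_ge0 w2_sum1 Sq2 p2_eq]]]].
pose w j := match split j with inl j1 => l * w1 j1 | inr j2 => (1 - l) * w2 j2 end.
pose q j := match split j with inl j1 => q1 j1 | inr j2 => q2 j2 end.
have sum_split (F : 'I_m1 -> R) (G : 'I_m2 -> R) :
    \sum_(j < m1 + m2) (match split j with inl j1 => F j1 | inr j2 => G j2 end) =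
    \sum_j F j + \sum_j G j.
  by rewrite big_split_ord; congr (_ + _); apply: eq_bigr => j _;
    rewrite (unsplitK (inl _)) || rewrite (unsplitK (inr _)).
exists (m1 + m2)%N, w, q; split.
- move=> j; rewrite /w; case: split => j'; apply: mulr_ge0 => //.
  by rewrite subr_ge0.
- by rewrite sum_split -!mulr_sumr w1_sum1 w2_sum1 !mulr1 subrKC.
- by move=> j; rewrite /q; case: split.
- move=> t u; rewrite p1_eq p2_eq !mulr_sumr.
  rewrite -(sum_split (fun j => l * (w1 j * q1 j t u)) (fun j => (1 - l) * (w2 j * q2 j t u))).
  by apply: eq_bigr => j _; rewrite /w /q; case: split => j'; rewrite mulrA.
Qed.

End ConvexHull.

Section Composition.
Variables (R : realType) (N : nat) (nA nX nI nO : 'I_N -> nat).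
Implicit Types (L : local_int R nA nX nI nO) (W V : vec nI -> vec nO -> R).

Lemma delta_fun_ge0 (T U : finType) (f : U -> T) t u : 0 <= delta_fun R f t u.
Proof. by rewrite /delta_fun; case: ifP; rewrite ?ler01. Qed.

Lemma delta_valid (T U : finType) (f : U -> T) : is_cond (delta_fun R f).
Proof.
split=> [t u|u]; first exact: delta_fun_ge0.
rewrite (bigD1 (f u)) //= /delta_fun eqxx big1 ?addr0 //.
by move=> t /negbTE ->.
Qed.

Lemma compose_ge0 L W x a :
  valid_local_int L -> (forall i o, 0 <= W i o) -> 0 <= compose L W x a.
Proof.
move=> validL W_ge0; apply: sumr_ge0 => i _; apply: sumr_ge0 => o _.
by apply: mulr_ge0 => //; apply: prodr_ge0 => k _; case: (validL k).
Qed.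

Lemma compose_lin L (J : finType) (w : J -> R) (V : J -> vec nI -> vec nO -> R) W x a :
  (forall i o, W i o = \sum_j w j * V j i o) ->
  compose L W x a = \sum_j w j * compose L (V j) x a.
Proof.
move=> W_eq; rewrite /compose.
under eq_bigr do under eq_bigr do rewrite W_eq mulr_sumr.
under eq_bigr do rewrite exchange_big.
rewrite exchange_big; apply: eq_bigr => j _.
rewrite mulr_sumr; apply: eq_bigr => i _; rewrite mulr_sumr; apply: eq_bigr => o _.
by rewrite mulrCA.
Qed.

Lemma compose_mix2 L (l m : R) V1 V2 x a :
  compose L (fun i o => l * V1 i o + m * V2 i o) x a =
  l * compose L V1 x a + m * compose L V2 x a.
Proof.
rewrite /compose !mulr_sumr -big_split; apply: eq_bigr => i _.
rewrite !mulr_sumr -big_split; apply: eq_bigr => o _.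
by rewrite mulrDr; congr (_ + _); rewrite mulrCA.
Qed.

Lemma compose_delta L (om : vec nO -> vec nI) x a :
  compose L (delta_fun R om) x a =
  \sum_(o : vec nO) \prod_(k < N) L k (x k, o k) (a k, om o k).
Proof.
rewrite /compose exchange_big; apply: eq_bigr => o _.
rewrite (bigD1 (om o)) //= [X in _ + X]big1 ?addr0 => [|i ne].
  by rewrite /delta_fun eqxx mulr1.
by rewrite /delta_fun (negbTE ne) mulr0.
Qed.

End Composition.

Lemma prod_indicator (R : realType) (I : finType) (P : pred I) :
  \prod_i (if P i then 1 else 0 : R) = if [forall i, P i] then 1 else 0.
Proof.
case: ifP => [/forallP allP|/negbT]; first by apply: big1 => i _; rewrite allP.
rewrite negb_forall => /existsP [i /negbTE Pi].
by rewrite (bigD1 i) //= Pi mul0r.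
Qed.

Lemma sum_pair (R : realType) (A B : finType) (F : A * B -> R) :
  \sum_t F t = \sum_a \sum_b F (a, b).
Proof. by rewrite pair_bigA; apply: eq_bigr => -[]. Qed.

Lemma sum_vec_point (R : realType) N (n : 'I_N -> nat) (v : vec n) (F : vec n -> R) :
  \sum_(o : vec n) F o * \prod_k (if o k == v k then 1 else 0) = F v.
Proof.
under eq_bigr => o _ do rewrite prod_indicator.
rewrite (bigD1 v) //= [X in _ + X]big1 ?addr0 => [|o ne].
  by case: forallP => [_|[]]; rewrite ?mulr1.
case: forallP => [eq_ov|_]; last by rewrite mulr0.
by case/eqP: ne; apply/ffunP => k; apply/eqP.
Qed.

Definition vmap N (n n' : 'I_N -> nat) (f : forall k, 'I_(n k) -> 'I_(n' k))
  (v : vec n) : vec n' := [ffun k => f k (v k)].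

Lemma sum_vec_section (R : realType) N (n n' : 'I_N -> nat)
  (emb : forall k, 'I_(n k) -> 'I_(n' k)) (pi : forall k, 'I_(n' k) -> 'I_(n k))
  (F : vec n -> R) :
  (forall k, cancel (emb k) (pi k)) ->
  \sum_(o' : vec n') F (vmap pi o') *
      \prod_k (if o' k == emb k (pi k (o' k)) then 1 else 0) =
  \sum_(o : vec n) F o.
Proof.
move=> embK.
have vmapK (o : vec n) : vmap pi (vmap emb o) = o.
  by apply/ffunP => k; rewrite !ffunE embK.
under eq_bigr => o' _ do rewrite prod_indicator.
rewrite (bigID (fun o' => o' == vmap emb (vmap pi o'))) /=.
rewrite [X in _ + X]big1 ?addr0 => [|o' ne]; last first.
  case: forallP => [eq_o'|_]; last by rewrite mulr0.
  by case/eqP: ne; apply/ffunP => k; rewrite !ffunE; apply/eqP; apply: eq_o'.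
rewrite (reindex_onto (vmap emb) (vmap pi)) => [|o' /eqP eq_o']; last by rewrite -eq_o'.
apply: eq_big => [o|o _]; first by rewrite vmapK !eqxx.
case: forallP => [_|[k]]; first by rewrite vmapK mulr1.
by rewrite ffunE embK.
Qed.

(* A fixed bijection between pairs and a single ordinal, used to let one
   outcome of a party carry both an outcome and an output label. *)
Lemma card_ord_pair m n : #|{:'I_m * 'I_n}| = (m * n)%N.
Proof. by rewrite card_prod !card_ord. Qed.

Definition enc m n (p : 'I_m * 'I_n) : 'I_(m * n) :=
  cast_ord (card_ord_pair m n) (enum_rank p).
Definition dec m n (k : 'I_(m * n)) : 'I_m * 'I_n :=
  enum_val (cast_ord (esym (card_ord_pair m n)) k).

Lemma encK m n : cancel (@enc m n) (@dec m n).
Proof. by move=> p; rewrite /enc /dec cast_ordK enum_rankK. Qed.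
Lemma decK m n : cancel (@dec m n) (@enc m n).
Proof. by move=> k; rewrite /enc /dec enum_valK cast_ordKV. Qed.

Definition enc_vec N (m n : 'I_N -> nat) (x : vec m) (o : vec n) :
  vec (fun k => (m k * n k)%N) := [ffun k => enc (x k, o k)].

Lemma sum_vec_pair (R : realType) N (m n : 'I_N -> nat)
  (F : vec (fun k => (m k * n k)%N) -> R) :
  \sum_y F y = \sum_(x : vec m) \sum_(o : vec n) F (enc_vec x o).
Proof.
pose split_vec y : vec m * vec n :=
  ([ffun k => (dec (y k)).1], [ffun k => (dec (y k)).2]).
rewrite pair_bigA (reindex (fun xo => enc_vec xo.1 xo.2)) //=.
exists split_vec => [[x o] _|y _]; rewrite /split_vec /enc_vec /=.
  by congr (_, _); apply/ffunP => k; rewrite !ffunE encK.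
by apply/ffunP => k; rewrite !ffunE -surjective_pairing decK.
Qed.

Section Relabel.
Variables (R : realType) (N : nat) (nI nO nI' nO' : 'I_N -> nat).
Variables (e : forall k, 'I_(nI k) -> 'I_(nI' k))
          (pi : forall k, 'I_(nO' k) -> 'I_(nO k)).
Arguments e : clear implicits.
Arguments pi : clear implicits.

Definition postproc (om : vec nO -> vec nI) (o' : vec nO') : vec nI' :=
  vmap e (om (vmap pi o')).

Definition relabel (W : vec nI -> vec nO -> R) (i' : vec nI') (o' : vec nO') : R :=
  \sum_(i | vmap e i == i') W i (vmap pi o').

Lemma relabel_delta (om : vec nO -> vec nI) :
  relabel (delta_fun R om) = delta_fun R (postproc om).
Proof.
apply: functional_extensionality => i'; apply: functional_extensionality => o'.
rewrite /relabel /delta_fun big_mkcond (bigD1 (om (vmap pi o'))) //= eqxx.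
rewrite big1 ?addr0 => [|i /negbTE ->]; last by case: ifP.
by rewrite eq_sym.
Qed.

Section PullBack.
Variables (nA nX : 'I_N -> nat) (L' : local_int R nA nX nI' nO').
Arguments L' : clear implicits.

(* Interventions for the unrelabelled process simulating L': each party's
   outcome encodes the pair (x, o') of an outcome of L' and a primed output,
   the actual output is pi o' and the received input is relabelled by e. *)
Definition pullback : local_int R nA (fun k => (nX k * nO' k)%N) nI nO :=
  fun k yo ai => L' k (dec yo.1) (ai.1, e k ai.2) *
                 (if yo.2 == pi k (dec yo.1).2 then 1 else 0).
Arguments pullback : clear implicits.

Lemma pullback_valid : valid_local_int L' -> valid_local_int pullback.
Proof.
move=> validL' k; split => [[y o] [a i]|[a i]].
  apply: mulr_ge0; first by case: (validL' k).
  by case: ifP; rewrite ?ler01.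
rewrite sum_pair -(proj2 (validL' k) (a, e k i)) (reindex (@enc _ _)) /=; last first.
  by exists (@dec _ _) => ? _; rewrite ?encK ?decK.
apply: eq_bigr => -[x o'] _; rewrite /pullback /= encK /=.
rewrite (bigD1 (pi k o')) //= eqxx mulr1 big1 ?addr0 // => o /negbTE ->.
by rewrite mulr0.
Qed.

Lemma compose_pullback (om : vec nO -> vec nI) (x : vec nX) (o' : vec nO') a :
  compose pullback (delta_fun R om) (enc_vec x o') a =
  \prod_k L' k (x k, o' k) (a k, postproc om o' k).
Proof.
rewrite compose_delta.
transitivity (\sum_o (\prod_k L' k (x k, o' k) (a k, e k (om o k))) *
                     \prod_k (if o k == vmap pi o' k then 1 else 0)).
  apply: eq_bigr => o _; rewrite -big_split /=; apply: eq_bigr => k _.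
  by rewrite /pullback /enc_vec /vmap !ffunE encK.
rewrite (sum_vec_point (vmap pi o') (fun o => \prod_k L' k (x k, o' k) (a k, e k (om o k)))).
by apply: eq_bigr => k _; rewrite /postproc /vmap ffunE.
Qed.

End PullBack.

(* Classical processes are closed under local relabellings: the relabelled
   experiment is a coarse-graining of an experiment on the original one. *)
Lemma process_function_postproc (om : vec nO -> vec nI) :
  process_function R om -> process_function R (postproc om).
Proof.
move=> om_proc nA nX L' validL'; split => [x a|a].
  by apply: compose_ge0 => // i o; apply: delta_fun_ge0.
rewrite -(proj2 (om_proc _ _ _ (pullback_valid validL')) a) sum_vec_pair.
apply: eq_bigr => x _; rewrite compose_delta; apply: eq_bigr => o' _.
by rewrite compose_pullback.
Qed.

(* Relabelling maps the deterministic-extrema polytope into itself, as it is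
   linear and maps process functions to process functions. *)
Lemma relabel_polytope W :
  det_extrema_polytope W -> det_extrema_polytope (relabel W).
Proof.
move=> [m [w [V [w_ge0 w_sum1 V_det W_eq]]]].
exists m, w, (fun j => relabel (V j)); split => // [j|i' o'].
  have [om [om_proc ->]] := V_det j.
  by exists (postproc om); rewrite relabel_delta; split => //;
    apply: process_function_postproc.
rewrite /relabel; under eq_bigr do rewrite W_eq.
by rewrite exchange_big; apply: eq_bigr => j _; rewrite mulr_sumr.
Qed.

Lemma compose_relabel (nA nX : 'I_N -> nat)
  (L : local_int R nA nX nI nO) (L' : local_int R nA nX nI' nO')
  (emb : forall k, 'I_(nO k) -> 'I_(nO' k)) :
  (forall k, cancel (emb k) (pi k)) ->
  (forall k x o' a i, L' k (x, o') (a, e k i) =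
     L k (x, pi k o') (a, i) * (if o' == emb k (pi k o') then 1 else 0)) ->
  forall W x a, compose L' (relabel W) x a = compose L W x a.
Proof.
move=> embK L'_eq W x a.
(* the relabelled inputs vmap e i are the only ones the primed process feeds *)
transitivity (\sum_(i : vec nI) \sum_(o' : vec nO')
    (\prod_k L' k (x k, o' k) (a k, e k (i k))) * W i (vmap pi o')).
  rewrite /compose /relabel [RHS](partition_big (vmap e) xpredT) //=.
  apply: eq_bigr => i' _; under eq_bigr do rewrite mulr_sumr.
  rewrite exchange_big; apply: eq_bigr => i /eqP <-; apply: eq_bigr => o' _.
  by congr (_ * _); apply: eq_bigr => k _; rewrite ffunE.
(* the primed outputs contribute only through the section emb *)
apply: eq_bigr => i _.
rewrite -(sum_vec_section (fun o => (\prod_k L k (x k, o k) (a k, i k)) * W i o) embK).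
apply: eq_bigr => o' _; rewrite (eq_bigr _ (fun k _ => L'_eq k _ _ _ _)) big_split /=.
by under [in RHS]eq_bigr do rewrite ffunE; rewrite mulrAC.
Qed.

End Relabel.

Section DirectSum.
Variables (R : realType) (N : nat) (nA nX nI1 nO1 nI2 nO2 : 'I_N -> nat).
Variables (L1 : local_int R nA nX nI1 nO1) (L2 : local_int R nA nX nI2 nO2).
Arguments L1 : clear implicits.
Arguments L2 : clear implicits.
(* Default outputs, needed to read an output of one block in the other. *)
Variables (d1 : vec nO1) (d2 : vec nO2).

(* Each party's inputs and outputs are the disjoint unions of those of two
   experiments; a party receiving a block-b input acts as in experiment b
   and answers with a block-b output. *)
Definition sum_in (k : 'I_N) : nat := (nI1 k + nI2 k)%N.
Definition sum_out (k : 'I_N) : nat := (nO1 k + nO2 k)%N.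

Definition sum_int : local_int R nA nX sum_in sum_out := fun k xo ai =>
  match split ai.2, split xo.2 with
  | inl i1, inl o1 => L1 k (xo.1, o1) (ai.1, i1)
  | inr i2, inr o2 => L2 k (xo.1, o2) (ai.1, i2)
  | _, _ => 0
  end.
Arguments sum_int : clear implicits.

Lemma sum_int_valid :
  valid_local_int L1 -> valid_local_int L2 -> valid_local_int sum_int.
Proof.
move=> valid1 valid2 k; split => [[x o] [a i]|[a i]].
  rewrite /sum_int /=; case: split => i'; case: split => o' //;
    by [case: (valid1 k)|case: (valid2 k)].
rewrite sum_pair /sum_int /=; case: split => [i1|i2].
- rewrite -(proj2 (valid1 k) (a, i1)) sum_pair; apply: eq_bigr => x _.
  rewrite big_split_ord /= [X in _ + X]big1 ?addr0 => [|o _]; last first.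
    by rewrite (unsplitK (inr _)).
  by apply: eq_bigr => o _; rewrite (unsplitK (inl _)).
- rewrite -(proj2 (valid2 k) (a, i2)) sum_pair; apply: eq_bigr => x _.
  rewrite big_split_ord /= big1 ?add0r => [|o _]; last by rewrite (unsplitK (inl _)).
  by apply: eq_bigr => o _; rewrite (unsplitK (inr _)).
Qed.

Definition proj1_out k (o : 'I_(sum_out k)) : 'I_(nO1 k) :=
  if split o is inl o1 then o1 else d1 k.
Definition proj2_out k (o : 'I_(sum_out k)) : 'I_(nO2 k) :=
  if split o is inr o2 then o2 else d2 k.

Lemma sum_int_left k x o a i :
  sum_int k (x, o) (a, lshift _ i) =
  L1 k (x, proj1_out o) (a, i) * (if o == lshift _ (proj1_out o) then 1 else 0).
Proof.
rewrite /sum_int /proj1_out /= (unsplitK (inl _)).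
by case: split_ordP => o' ->; rewrite ?eqxx ?mulr1 // eq_rlshift mulr0.
Qed.

Lemma sum_int_right k x o a i :
  sum_int k (x, o) (a, rshift _ i) =
  L2 k (x, proj2_out o) (a, i) * (if o == rshift _ (proj2_out o) then 1 else 0).
Proof.
rewrite /sum_int /proj2_out /= (unsplitK (inr _)).
by case: split_ordP => o' ->; rewrite ?eqxx ?mulr1 // eq_lrshift mulr0.
Qed.

Definition embed1 (W : vec nI1 -> vec nO1 -> R) : vec sum_in -> vec sum_out -> R :=
  relabel (fun k => @lshift (nI1 k) (nI2 k)) proj1_out W.
Definition embed2 (W : vec nI2 -> vec nO2 -> R) : vec sum_in -> vec sum_out -> R :=
  relabel (fun k => @rshift (nI1 k) (nI2 k)) proj2_out W.

Lemma compose_embed1 W x a : compose sum_int (embed1 W) x a = compose L1 W x a.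
Proof.
apply: (compose_relabel (emb := fun k => @lshift (nO1 k) (nO2 k))) => k.
  by move=> o; rewrite /proj1_out (unsplitK (inl _)).
exact: sum_int_left.
Qed.

Lemma compose_embed2 W x a : compose sum_int (embed2 W) x a = compose L2 W x a.
Proof.
apply: (compose_relabel (emb := fun k => @rshift (nO1 k) (nO2 k))) => k.
  by move=> o; rewrite /proj2_out (unsplitK (inr _)).
exact: sum_int_right.
Qed.

End DirectSum.

Section Consistency.
Variables (R : realType) (N : nat) (nA nX : 'I_N -> nat).

(* A deterministically consistent scenario with at least one setting has at
   least one joint output: a process function normalises the composition. *)
Lemma outputs_inhabited (nI nO : 'I_N -> nat) (L : local_int R nA nX nI nO)
  (W : vec nI -> vec nO -> R) (a : vec nA) :
  valid_local_int L -> det_extrema_polytope W -> inhabited (vec nO).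
Proof.
move=> validL [m [w [V [_ w_sum1 V_det _]]]].
case: (pickP (@predT (vec nO))) => [o _|no_output]; first by constructor.
case: m w w_sum1 V V_det => [|m] w w_sum1 V V_det.
  by move: w_sum1; rewrite big_ord0 => /eqP; rewrite eq_sym oner_eq0.
have [om [om_proc _]] := V_det ord0.
have := proj2 (om_proc nA nX L validL) a.
under eq_bigr do rewrite compose_delta big_pred0 //.
by rewrite big1 // => /eqP; rewrite eq_sym oner_eq0.
Qed.

(* Mixing two scenarios: run their direct sum with the mixture of the two
   embedded processes. *)
Lemma det_consistent_convex : convex_set (@det_consistent R N nA nX).
Proof.
move=> p1 p2 l l_ge0 l_le1 [nI1 [nO1 [L1 [W1 [valid1 poly1 p1_eq]]]]]
  [nI2 [nO2 [L2 [W2 [valid2 poly2 p2_eq]]]]].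
case: (pickP (@predT (vec nA))) => [a0 _|no_setting]; last first.
  by exists nI1, nO1, L1, W1; split => // x a; have := no_setting a.
have [d1] := outputs_inhabited a0 valid1 poly1.
have [d2] := outputs_inhabited a0 valid2 poly2.
exists (sum_in nI1 nI2), (sum_out nO1 nO2), (sum_int L1 L2),
  (fun i o => l * embed1 d1 W1 i o + (1 - l) * embed2 d2 W2 i o); split.
- exact: sum_int_valid.
- by apply: conv_hull_convex => //; apply: relabel_polytope.
- by move=> x a; rewrite compose_mix2 compose_embed1 compose_embed2 p1_eq p2_eq.
Qed.

End Consistency.

Section DeterministicDecomposition.
Variable R : realType.

(* A conditional distribution p(t|u) is the mixture of the deterministic
   ones delta_g, g : U -> T, with product weights prod_u p(g u | u). *)
Lemma det_weights_sum1 (T U : finType) (p : T -> U -> R) :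
  (forall u, \sum_t p t u = 1) -> \sum_(g : {ffun U -> T}) \prod_u p (g u) u = 1.
Proof.
move=> p_sum1; rewrite -(bigA_distr_bigA (fun u t => p t u)).
by apply: big1 => u _; apply: p_sum1.
Qed.

Lemma det_decomposition (T U : finType) (p : T -> U -> R) t u :
  (forall u, \sum_t p t u = 1) ->
  p t u = \sum_(g : {ffun U -> T}) (\prod_u' p (g u') u') * delta_fun R g t u.
Proof.
move=> p_sum1.
pose ind u' t' : R := if u' == u then (if t == t' then 1 else 0) else 1.
transitivity (\sum_(g : {ffun U -> T}) \prod_u' (p (g u') u' * ind u' (g u'))).
  rewrite -(bigA_distr_bigA (fun u' t' => p t' u' * ind u' t')).
  rewrite (bigD1 u) //= [X in _ * X]big1 ?mulr1 => [|u' /negbTE ne].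
    rewrite /ind eqxx (bigD1 t) //= eqxx mulr1 big1 ?addr0 // => t' ne.
    by rewrite eq_sym (negbTE ne) mulr0.
  by under eq_bigr do rewrite /ind ne mulr1; apply: p_sum1.
apply: eq_bigr => g _; rewrite big_split /=; congr (_ * _).
by rewrite (bigD1 u) //= /ind eqxx big1 ?mulr1 // => u' /negbTE ->.
Qed.

Lemma sum1_unique (I : finType) (c : I -> nat) :
  (\sum_i c i = 1)%N -> exists i, c i = 1%N /\ forall j, j != i -> c j = 0%N.
Proof.
move=> c_sum1; case: (pickP (fun i => 0 < c i)%N) => [i ci_gt0|c0]; last first.
  by move: c_sum1; rewrite big1 // => j _; apply/eqP; rewrite eqn0Ngt c0.
move: c_sum1; rewrite (bigD1 i) //= => c_sum1.
have [ci1 rest0] : c i = 1%N /\ (\sum_(j | j != i) c j = 0)%N by lia.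
exists i; split => // j ne; move/eqP: rest0; rewrite sum_nat_eq0 => /forallP/(_ j).
by rewrite ne => /eqP.
Qed.

Lemma nat_cond_deterministic (T U : finType) (c : T -> U -> nat) :
  (forall u, \sum_t (c t u)%:R = 1 :> R) ->
  exists f : U -> T, forall t u, (c t u)%:R = delta_fun R f t u.
Proof.
move=> c_sum1.
have sum1 u : (\sum_t c t u = 1)%N.
  by apply/eqP; rewrite -(pnatr_eq1 R) natr_sum c_sum1.
have ex1 u : exists t, c t u == 1%N.
  by have [t [ct1 _]] := sum1_unique (sum1 u); exists t; rewrite ct1.
exists (fun u => xchoose (ex1 u)) => t u; rewrite /delta_fun.
have [t0 [ct0 c_other]] := sum1_unique (sum1 u).
have -> : xchoose (ex1 u) = t0.
  by apply/eqP; apply: contraT => ne; move: (xchooseP (ex1 u)); rewrite c_other.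
by case: eqVneq => [->|/c_other ->]; rewrite ?ct0.
Qed.

End DeterministicDecomposition.

Section DeterministicInterventions.
Variables (R : realType) (N : nat) (nA nX nI nO : 'I_N -> nat).
Implicit Types (L : local_int R nA nX nI nO) (W : vec nI -> vec nO -> R).

Definition replace_party L (k0 : 'I_N)
    (M : 'I_(nX k0) * 'I_(nO k0) -> 'I_(nA k0) * 'I_(nI k0) -> R) :
  local_int R nA nX nI nO :=
  @dfwith _ (fun k => 'I_(nX k) * 'I_(nO k) -> 'I_(nA k) * 'I_(nI k) -> R) L k0 M.
Arguments replace_party : clear implicits.

Lemma compose_party_lin L k0 (J : finType) (w : J -> R) M W x a :
  (forall t u, L k0 t u = \sum_j w j * M j t u) ->
  compose L W x a = \sum_j w j * compose (replace_party L k0 (M j)) W x a.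
Proof.
move=> L_eq; rewrite /compose.
under eq_bigr do under eq_bigr do rewrite (bigD1 k0) //=.
under eq_bigr do under eq_bigr do rewrite L_eq !mulr_suml.
under [RHS]eq_bigr do rewrite mulr_sumr.
rewrite [RHS]exchange_big; apply: eq_bigr => i _.
under [RHS]eq_bigr do rewrite mulr_sumr.
rewrite [RHS]exchange_big; apply: eq_bigr => o _.
apply: eq_bigr => j _; rewrite [in RHS](bigD1 k0) //= /replace_party dfwith_in -!mulrA.
congr (_ * (_ * (_ * _))); apply: eq_bigr => k ne.
by rewrite dfwith_out // eq_sym.
Qed.

(* Any property of correlations that is convex and holds whenever every
   party intervenes deterministically holds for all interventions: replace
   the parties one at a time by the deterministic decomposition. *)
Lemma deterministic_interventions_suffice (C : (vec nX -> vec nA -> R) -> Prop) W :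
  convex_set C ->
  (forall L, valid_local_int L ->
     (forall k, exists f, L k = delta_fun R f) -> C (compose L W)) ->
  forall L, valid_local_int L -> C (compose L W).
Proof.
move=> convC C_det.
(* invariant: only the parties k < n may intervene non-deterministically *)
suff C_upto n : (n <= N)%N -> forall L, valid_local_int L ->
    (forall k : 'I_N, (n <= k)%N -> exists f, L k = delta_fun R f) ->
    C (compose L W).
  by move=> L validL; apply: (C_upto N) => // k; rewrite leqNgt ltn_ord.
elim: n => [_ L validL L_det|n IHn n_lt L validL L_det].
  by apply: C_det => // k; apply: L_det.
(* decompose the intervention of party n into deterministic ones *)
pose k0 : 'I_N := Ordinal n_lt.
pose Lg (g : {ffun _ -> _}) := replace_party L k0 (delta_fun R g).
have [L0_ge0 L0_sum1] := validL k0.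
apply: (convex_comb convC (fun g => prodr_ge0 _ (fun u _ => L0_ge0 (g u) u))
          (det_weights_sum1 L0_sum1) (q := fun g => compose (Lg g) W)).
- move=> g; apply: IHn; first exact: ltnW.
    move=> k; rewrite /Lg /replace_party; case: dfwithP => [|k' _].
      exact: delta_valid.
    exact: validL.
  move=> k; rewrite /Lg /replace_party; case: dfwithP => [_|k' ne k'_ge].
    by exists g.
  apply: L_det; rewrite ltn_neqAle k'_ge andbT; apply: contra ne => /eqP eq_nk.
  by apply/eqP/val_inj.
- by move=> x a; apply: compose_party_lin => t u; apply: det_decomposition.
Qed.

(* Deterministic interventions against a process function yield a
   deterministic correlation: each value counts the consistent outputs. *)
Lemma compose_deterministic L (om : vec nO -> vec nI) :
  process_function R om -> valid_local_int L ->
  (forall k, exists f, L k = delta_fun R f) ->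
  deterministic_corr (compose L (delta_fun R om)).
Proof.
move=> om_proc validL L_det.
pose count (x : vec nX) (a : vec nA) : nat :=
  #|[pred o : vec nO | [forall k, L k (x k, o k) (a k, om o k) == 1]]|.
have L01 k t u : L k t u = if L k t u == 1 then 1 else 0.
  have [f ->] := L_det k; rewrite /delta_fun.
  by case: ifP => _; rewrite ?eqxx // eq_sym oner_eq0.
have count_eq x a : compose L (delta_fun R om) x a = (count x a)%:R.
  rewrite compose_delta.
  under eq_bigr do under eq_bigr do rewrite L01.
  under eq_bigr do rewrite prod_indicator.
  by rewrite -big_mkcond sumr_const.
have [f count_det] : exists f : vec nA -> vec nX,
    forall x a, (count x a)%:R = delta_fun R f x a.
  apply: nat_cond_deterministic => a.
  by have := proj2 (om_proc _ _ _ validL) a; under eq_bigr do rewrite count_eq.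
exists f; apply: functional_extensionality => x; apply: functional_extensionality => a.
by rewrite count_eq count_det.
Qed.

End DeterministicInterventions.

Lemma compose_process_in_hull (R : realType) N (nA nX nI nO : 'I_N -> nat)
  (L : local_int R nA nX nI nO) (om : vec nO -> vec nI) :
  process_function R om -> valid_local_int L ->
  conv_hull (fun q => deterministic_corr q /\ det_consistent q)
    (compose L (delta_fun R om)).
Proof.
move=> om_proc; apply: deterministic_interventions_suffice.
  exact: conv_hull_convex.
move=> L' validL' L'_det; apply: conv_hull_in; split.
  exact: compose_deterministic.
exists nI, nO, L', (delta_fun R om); split => //.
by apply: conv_hull_in; exists om.
Qed.

Theorem mainTheorem6 (R : realType) (N : nat) (nA nX : 'I_N -> nat) :
  convex_set (@det_consistent R N nA nX) /\
  (forall p : vec nX -> vec nA -> R,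
     det_consistent p <->
     conv_hull (fun q => deterministic_corr q /\ det_consistent q) p).
Proof.
split=> [|p]; first exact: det_consistent_convex.
split; last first.
  by apply: conv_hull_min; [exact: det_consistent_convex | move=> q []].
(* p is the mixture of the compositions of L with the process functions of W *)
move=> [nI [nO [L [W [validL [m [w [V [w_ge0 w_sum1 V_det W_eq]]]] p_eq]]]]].
apply: (convex_comb _ w_ge0 w_sum1 (q := fun j => compose L (V j))).
- exact: conv_hull_convex.
- by move=> j; have [om [om_proc ->]] := V_det j; apply: compose_process_in_hull.
- by move=> x a; rewrite p_eq; apply: compose_lin.
Qed.
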